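(* Let $t\in\mathbb{R}$, $q$ sufficiently large, and $0<k<1$, with all objects as in the context. Then \begin{align*} \sum_{\chi\bmod q}^{*}|L(\tfrac12+it,f\otimes\chi)|^{2k}\ll&\Big(\sum_{\chi\bmod q}^{*}|L(\tfrac12+it,f\otimes\chi)|^2\sum_{v=0}^{R}\Big(\prod_{j=1}^{v}|\mathcal{N}_j(t,\chi,k-1)|^2\Big)|\mathcal{Q}_{v+1}(t,\chi,k)|^2\Big)^{k}\\ &\times\Big(\sum_{\chi\bmod q}^{*}\sum_{v=0}^{R}\Big(\prod_{j=1}^{v}|\mathcal{N}_j(t,\chi,k)|^2\Big)|\mathcal{Q}_{v+1}(t,\chi,k)|^2\Big)^{1-k}, \end{align*} with implied constant depending only on $k$ (and $f$).
   Context: $f$ is a fixed holomorphic Hecke eigenform of even weight $\kappa$, level $1$, normalized Hecke eigenvalues $\lambda_f(n)$; $L(s,f\otimes\chi)=\sum_n\lambda_f(n)\chi(n)n^{-s}$ (entire continuation) for $\chi$ primitive mod $q$, $q\not\equiv2\pmod4$; $\sum^*_{\chi\bmod q}$ is the sum over primitive characters mod $q$. Fix $k>0$, $k\ne1$, and natural numbers $N,M$ large enough depending on $k$. Let $\ell_1=2\lceil N\log\log q\rceil$ and $\ell_{j+1}=2\lceil N\log\ell_j\rceil$ for $j\ge1$, and let $R$ be the largest natural number with $\ell_R>10^M$. Let $P_1$ be the set of odd primes $\le q^{1/\ell_1^2}$ and, for $2\le j\le R$, $P_j$ the set of primes in $(q^{1/\ell_{j-1}^2},q^{1/\ell_j^2}]$.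 Define $\mathcal{P}_j(t,\chi)=\sum_{p\in P_j}\lambda_f(p)\chi(p)p^{-1/2-it}$ and $\mathcal{Q}_j(t,\chi,k)=\big(c_k\mathcal{P}_j(t,\chi)/\ell_j\big)^{r_k\ell_j}$ for $1\le j\le R$, with $\mathcal{Q}_{R+1}(t,\chi,k)=1$, where $c_k=64\max(1,k)$, $r_k=2$ if $k>1$ and $r_k=\lceil1+1/k\rceil+1$ if $k<1$. For $\ell\ge0$, $E_\ell(x)=\sum_{j=0}^{\ell}x^j/j!$; for real $\alpha$, $\mathcal{N}_j(t,\chi,\alpha)=E_{\ell_j}(\alpha\mathcal{P}_j(t,\chi))$ and $\mathcal{N}(t,\chi,\alpha)=\prod_{j=1}^R\mathcal{N}_j(t,\chi,\alpha)$. Empty products equal $1$. *)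

From Stdlib Require Import Reals Lra Lia ZArith Znumtheory List ClassicalEpsilon.
From Coquelicot Require Import Coquelicot.
Import ListNotations.
Open Scope R_scope.

Definition cexp (z : C) : C :=
  (RtoC (exp (Re z)) * (RtoC (cos (Im z)) + Ci * RtoC (sin (Im z))))%C.

Definition npow_neg (n : nat) (s : C) : C := cexp (- s * RtoC (ln (INR n)))%C.

(* real power x^y for x >= 0, y > 0, with the convention 0^y = 0 *)
Definition rpow (x y : R) : R := if Req_EM_T x 0 then 0 else Rpower x y.

Definition Rceil (x : R) : Z := (- (up (- x) - 1))%Z.
Definition natceil (x : R) : nat := Z.to_nat (Rceil x).

Definition cdiff (F : C -> C) (z : C) : Prop := @ex_derive C_AbsRing C_NormedModule F z.

Definition C_series (a : nat -> C) (l : C) : Prop := @is_series C_AbsRing C_NormedModule a l.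

Definition upper (z : C) : Prop := Im z > 0.

Definition is_cusp_form_level1 (kappa : nat) (f : C -> C) (a : nat -> C) : Prop :=
  (forall z, upper z -> cdiff f z) /\
  (forall (A B Cc D : Z), (A * D - B * Cc)%Z = 1%Z ->
     forall z, upper z ->
       f ((RtoC (IZR A) * z + RtoC (IZR B)) / (RtoC (IZR Cc) * z + RtoC (IZR D)))%C
       = ((RtoC (IZR Cc) * z + RtoC (IZR D)) ^ kappa * f z)%C) /\
  a 0%nat = 0%C /\
  (forall z, upper z ->
     C_series (fun n => a n * cexp (RtoC (2 * PI * INR n) * Ci * z))%C (f z)).

(* Hecke operator T_n on weight kappa, level 1:
   (T_n f)(z) = n^{kappa-1} sum_{ad = n, d>0} sum_{0<=b<d} d^{-kappa} f((az+b)/d) *)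
Definition hecke_op (kappa : nat) (n : nat) (f : C -> C) (z : C) : C :=
  (RtoC (INR n ^ (kappa - 1)) *
   fold_right Cplus 0%C
     (map (fun d =>
        if Nat.eqb (Nat.modulo n d) 0 then
          fold_right Cplus 0%C
            (map (fun b =>
               RtoC (/ INR d ^ kappa) *
               f ((RtoC (INR (Nat.div n d)) * z + RtoC (INR b)) / RtoC (INR d)))
               (seq 0 d))
        else 0%C)
        (seq 1 n)))%C.

Definition is_normalized_hecke_eigenform (kappa : nat) (f : C -> C) (a : nat -> C) : Prop :=
  Nat.Even kappa /\ is_cusp_form_level1 kappa f a /\ a 1%nat = 1%C /\
  (forall n, (1 <= n)%nat -> forall z, upper z -> hecke_op kappa n f z = (a n * f z)%C).

Definition lam (kappa : nat) (a : nat -> C) (n : nat) : C :=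
  (a n / RtoC (sqrt (INR n) ^ (kappa - 1)))%C.

Definition is_dirichlet_char (q : nat) (chi : nat -> C) : Prop :=
  (forall n, chi (n + q)%nat = chi n) /\
  (forall m n, chi (m * n)%nat = (chi m * chi n)%C) /\
  chi 1%nat = 1%C /\
  (forall n, chi n = 0%C <-> Nat.gcd n q <> 1%nat).

(* primitive: not induced by a character of any proper modulus d | q, d < q *)
Definition is_primitive_char (q : nat) (chi : nat -> C) : Prop :=
  is_dirichlet_char q chi /\
  forall d, Nat.divide d q -> (d < q)%nat ->
    ~ (forall n, Nat.gcd n q = 1%nat -> Nat.modulo n d = Nat.modulo 1 d -> chi n = 1%C).

Definition prim_chars (q : nat) : list (nat -> C) :=
  epsilon (inhabits nil)
    (fun l => NoDup l /\ forall chi, In chi l <-> is_primitive_char q chi).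

Definition sum_prim (q : nat) (F : (nat -> C) -> R) : R :=
  fold_right Rplus 0 (map F (prim_chars q)).

Definition is_L_continuation (lf : nat -> C) (chi : nat -> C) (F : C -> C) : Prop :=
  (forall s, cdiff F s) /\
  (forall s, Re s > 2 ->
     C_series (fun n => if Nat.eqb n 0 then 0%C else (lf n * chi n * npow_neg n s)%C) (F s)).

Definition Lfun (lf : nat -> C) (chi : nat -> C) (s : C) : C :=
  epsilon (inhabits (fun _ => 0%C)) (is_L_continuation lf chi) s.

Fixpoint ell (N q j : nat) : nat :=
  match j with
  | O => O
  | S O => (2 * natceil (INR N * ln (ln (INR q))))%nat
  | S j' => (2 * natceil (INR N * ln (INR (ell N q j'))))%nat
  end.

Definition Rmax_idx (N M q : nat) : nat :=
  epsilon (inhabits 0%nat)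
    (fun R => (1 <= R)%nat /\ (ell N q R > 10 ^ M)%nat /\
       forall j, (1 <= j)%nat -> (ell N q j > 10 ^ M)%nat -> (j <= R)%nat).

Definition bound (N q j : nat) : R := Rpower (INR q) (/ (INR (ell N q j) ^ 2)).

Definition inP (N q j p : nat) : bool :=
  if prime_dec (Z.of_nat p) then
    if Rle_dec (INR p) (bound N q j) then
      match j with
      | O => false
      | S O => Nat.odd p
      | S j' => if Rlt_dec (bound N q j') (INR p) then true else false
      end
    else false
  else false.

(* P_j(t, chi) = sum_{p in P_j} lambda_f(p) chi(p) p^{-1/2-it} (all such p are <= q) *)
Definition Pj (lf : nat -> C) (N q j : nat) (t : R) (chi : nat -> C) : C :=
  fold_right Cplus 0%C
    (map (fun p => if inP N q j p
                   then (lf p * chi p * npow_neg p (RtoC (1/2) + RtoC t * Ci))%C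
                   else 0%C)
         (seq 0 (S q))).

Definition c_k (k : R) : R := 64 * Rmax 1 k.
Definition r_k (k : R) : nat :=
  if Rlt_dec 1 k then 2%nat else (natceil (1 + / k) + 1)%nat.

Definition Qj (lf : nat -> C) (N M q j : nat) (t : R) (chi : nat -> C) (k : R) : C :=
  if Nat.eqb j (S (Rmax_idx N M q)) then 1%C
  else ((RtoC (c_k k) * Pj lf N q j t chi / RtoC (INR (ell N q j)))
          ^ (r_k k * ell N q j))%C.

Definition Etrunc (l : nat) (x : C) : C :=
  fold_right Cplus 0%C (map (fun j => (x ^ j / RtoC (INR (fact j)))%C) (seq 0 (S l))).

Definition Nj (lf : nat -> C) (N q j : nat) (t : R) (chi : nat -> C) (alpha : R) : C :=
  Etrunc (ell N q j) (RtoC alpha * Pj lf N q j t chi)%C.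

Definition mollsum (lf : nat -> C) (N M q : nat) (t : R) (chi : nat -> C) (alpha k : R) : R :=
  fold_right Rplus 0
    (map (fun v =>
       fold_right Rmult 1 (map (fun j => Cmod (Nj lf N q j t chi alpha) ^ 2) (seq 1 v))
       * Cmod (Qj lf N M q (S v) t chi k) ^ 2)
       (seq 0 (S (Rmax_idx N M q)))).

(* For each character take [v] maximal such that [64 |P_j| < ell_j] for all [j <= v]
   (so [v = R] or [|Q_{v+1}| >= 1]).  For such [j] the truncated exponential satisfies
   [|E_{ell_j}(alpha P_j)|^2 >= e^{2 alpha Re P_j} (1 - 2^{-ell_j})], and because the [ell_j]
   decrease strictly, [prod_{j<=v} (1 - 2^{-ell_j}) >= 1/2].  Hence, with [S = sum_{j<=v} Re P_j],
   the [v]-th terms of the two mollified sums are at least [e^{2(k-1)S}/2] and [e^{2kS}/2], and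
   [|L|^{2k} = (|L|^2 e^{2(k-1)S})^k (e^{2kS})^{1-k}] gives the bound pointwise with constant 2,
   whatever the value of [L].  Hoelder's inequality over the characters concludes. *)

From Stdlib Require Import Reals.
From Coquelicot Require Import Coquelicot.
From Stdlib Require Import Lra Lia List Factorial ZArith ClassicalEpsilon.
Open Scope R_scope.

Definition lsum {T} (l : list T) (f : T -> R) : R := fold_right Rplus 0 (map f l).
Definition lprod {T} (l : list T) (f : T -> R) : R := fold_right Rmult 1 (map f l).

Section ListSums.
Context {T : Type}.
Implicit Types (l : list T) (f g : T -> R).

Lemma lsum_le l f g : (forall c, In c l -> f c <= g c) -> lsum l f <= lsum l g.
Proof.
  unfold lsum; induction l as [|a l IH]; simpl; intros H; [lra|].
  specialize (IH (fun c Hc => H c (or_intror Hc))). specialize (H a (or_introl eq_refl)). lra.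
Qed.

Lemma lsum_nonneg l f : (forall c, In c l -> 0 <= f c) -> 0 <= lsum l f.
Proof.
  unfold lsum; induction l as [|a l IH]; simpl; intros H; [lra|].
  specialize (IH (fun c Hc => H c (or_intror Hc))). specialize (H a (or_introl eq_refl)). lra.
Qed.

Lemma lsum_const0 l : lsum l (fun _ => 0) = 0.
Proof. unfold lsum; induction l as [|a l IH]; simpl; [|rewrite IH]; ring. Qed.

Lemma lsum_scal l f a : lsum l (fun c => a * f c) = a * lsum l f.
Proof. unfold lsum; induction l as [|b l IH]; simpl; [|rewrite IH]; ring. Qed.

Lemma lsum_lincomb l f g a b :
  lsum l (fun c => a * f c + b * g c) = a * lsum l f + b * lsum l g.
Proof. unfold lsum; induction l as [|x l IH]; simpl; [|rewrite IH]; ring. Qed.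

Lemma lsum_ge_term l f c : (forall c, In c l -> 0 <= f c) -> In c l -> f c <= lsum l f.
Proof.
  intros Hf Hc. induction l as [|a l IH]; [destruct Hc|].
  pose proof (lsum_nonneg l f (fun c Hc => Hf c (or_intror Hc))).
  pose proof (Hf a (or_introl eq_refl)). unfold lsum in *; simpl.
  destruct Hc as [<-|Hc]; [lra|].
  specialize (IH (fun c Hc => Hf c (or_intror Hc)) Hc). lra.
Qed.

Lemma lsum_eq0_inv l f : (forall c, In c l -> 0 <= f c) -> lsum l f = 0 ->
  forall c, In c l -> f c = 0.
Proof.
  intros Hf Hs c Hc. pose proof (lsum_ge_term l f c Hf Hc). pose proof (Hf c Hc). lra.
Qed.

Lemma lprod_nonneg l f : (forall c, In c l -> 0 <= f c) -> 0 <= lprod l f.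
Proof.
  unfold lprod; induction l as [|a l IH]; simpl; intros H; [lra|].
  apply Rmult_le_pos; [apply H; left; reflexivity|apply IH; intros; apply H; right; auto].
Qed.

Lemma lprod_exp_lsum_le l (a s d : T -> R) :
  (forall j, In j l -> exp (s j) * d j <= a j) -> (forall j, In j l -> 0 <= d j) ->
  exp (lsum l s) * lprod l d <= lprod l a.
Proof.
  intros Ha Hd. induction l as [|j l IH]; unfold lsum, lprod in *; simpl.
  - rewrite exp_0. lra.
  - rewrite exp_plus.
    assert (0 <= exp (fold_right Rplus 0 (map s l)) * fold_right Rmult 1 (map d l)).
    { apply Rmult_le_pos; [left; apply exp_pos|].
      apply (lprod_nonneg l d); intros; apply Hd; right; auto. }
    specialize (IH (fun j H => Ha j (or_intror H)) (fun j H => Hd j (or_intror H))).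
    pose proof (Ha j (or_introl eq_refl)). pose proof (Hd j (or_introl eq_refl)).
    pose proof (exp_pos (s j)).
    replace (exp (s j) * exp (fold_right Rplus 0 (map s l)) * (d j * fold_right Rmult 1 (map d l)))
      with ((exp (s j) * d j) * (exp (fold_right Rplus 0 (map s l)) * fold_right Rmult 1 (map d l)))
      by ring.
    apply Rmult_le_compat; auto. apply Rmult_le_pos; lra.
Qed.

End ListSums.

Lemma rpow_nonneg x y : 0 <= rpow x y.
Proof. unfold rpow. destruct (Req_EM_T x 0); [lra|left; apply exp_pos]. Qed.

Lemma rpow_0_l y : rpow 0 y = 0.
Proof. unfold rpow. destruct (Req_EM_T 0 0); [reflexivity|congruence]. Qed.

Lemma rpow_Rpower x y : x <> 0 -> rpow x y = Rpower x y.
Proof. unfold rpow. destruct (Req_EM_T x 0); [congruence|reflexivity]. Qed.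

(* From the convexity bound [1 + t <= exp t] at the weighted mean of logarithms. *)
Lemma Rpower_young a b k : 0 < a -> 0 < b -> 0 < k < 1 ->
  Rpower a k * Rpower b (1 - k) <= k * a + (1 - k) * b.
Proof.
  intros Ha Hb Hk. unfold Rpower. rewrite <- exp_plus.
  set (m := k * ln a + (1 - k) * ln b).
  rewrite <- (exp_ln a Ha), <- (exp_ln b Hb).
  replace (ln a) with (m + (ln a - m)) by ring. replace (ln b) with (m + (ln b - m)) by ring.
  rewrite !exp_plus.
  pose proof (exp_ineq1_le (ln a - m)). pose proof (exp_ineq1_le (ln b - m)). pose proof (exp_pos m).
  assert (0 <= k * exp m * (exp (ln a - m) - 1 - (ln a - m)))
    by (apply Rmult_le_pos; [apply Rmult_le_pos|]; lra).
  assert (0 <= (1 - k) * exp m * (exp (ln b - m) - 1 - (ln b - m)))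
    by (apply Rmult_le_pos; [apply Rmult_le_pos|]; lra).
  assert (k * (ln a - m) + (1 - k) * (ln b - m) = 0) by (unfold m; ring).
  replace (k * (m + (ln a - m)) + (1 - k) * (m + (ln b - m))) with m by (unfold m; ring).
  nra.
Qed.
Lemma lsum_holder {T} (l : list T) X Y k : 0 < k < 1 ->
  (forall c, In c l -> 0 <= X c) -> (forall c, In c l -> 0 <= Y c) ->
  lsum l (fun c => rpow (X c) k * rpow (Y c) (1 - k))
  <= rpow (lsum l X) k * rpow (lsum l Y) (1 - k).
Proof.
  intros Hk HX HY.
  set (SX := lsum l X). set (SY := lsum l Y).
  assert (HSX : 0 <= SX) by (apply lsum_nonneg; auto).
  assert (HSY : 0 <= SY) by (apply lsum_nonneg; auto).
  assert (Hrhs : 0 <= rpow SX k * rpow SY (1 - k)) by (apply Rmult_le_pos; apply rpow_nonneg).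
  destruct (Req_EM_T SX 0) as [E|NX].
  { eapply Rle_trans; [apply lsum_le|rewrite lsum_const0; exact Hrhs].
    intros c Hc. rewrite (lsum_eq0_inv l X HX E c Hc), rpow_0_l. lra. }
  destruct (Req_EM_T SY 0) as [E|NY].
  { eapply Rle_trans; [apply lsum_le|rewrite lsum_const0; exact Hrhs].
    intros c Hc. rewrite (lsum_eq0_inv l Y HY E c Hc), rpow_0_l. lra. }
  assert (PX : 0 < SX) by lra. assert (PY : 0 < SY) by lra.
  set (c0 := rpow SX k * rpow SY (1 - k)) in Hrhs |- *.
  (* Young's inequality applied to [X c / SX] and [Y c / SY], summed over [l]. *)
  apply Rle_trans with (lsum l (fun c => (c0 * k / SX) * X c + (c0 * (1 - k) / SY) * Y c)).
  2:{ rewrite lsum_lincomb. fold SX SY. right. field. lra. }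
  apply lsum_le. intros c Hc. pose proof (HX c Hc). pose proof (HY c Hc).
  assert (0 <= c0 * k / SX * X c + c0 * (1 - k) / SY * Y c).
  { apply Rplus_le_le_0_compat; apply Rmult_le_pos; auto; unfold Rdiv;
      apply Rmult_le_pos; try (apply Rmult_le_pos; lra); left; apply Rinv_0_lt_compat; lra. }
  destruct (Req_EM_T (X c) 0) as [E|NXc]; [rewrite E in *; rewrite rpow_0_l; lra|].
  destruct (Req_EM_T (Y c) 0) as [E|NYc]; [rewrite E in *; rewrite rpow_0_l; lra|].
  unfold c0. rewrite !rpow_Rpower by lra.
  replace (X c) with (SX * (X c / SX)) at 1 by (field; lra).
  replace (Y c) with (SY * (Y c / SY)) at 1 by (field; lra).
  rewrite <- !Rpower_mult_distr by (try apply Rdiv_lt_0_compat; lra).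
  pose proof (Rpower_young (X c / SX) (Y c / SY) k
                ltac:(apply Rdiv_lt_0_compat; lra) ltac:(apply Rdiv_lt_0_compat; lra) Hk).
  assert (0 < Rpower SX k * Rpower SY (1 - k))
    by (apply Rmult_lt_0_compat; unfold Rpower; apply exp_pos).
  apply Rle_trans with (Rpower SX k * Rpower SY (1 - k) *
                        (k * (X c / SX) + (1 - k) * (Y c / SY))).
  - replace (Rpower SX k * Rpower (X c / SX) k * (Rpower SY (1 - k) * Rpower (Y c / SY) (1 - k)))
      with (Rpower SX k * Rpower SY (1 - k) * (Rpower (X c / SX) k * Rpower (Y c / SY) (1 - k)))
      by ring.
    apply Rmult_le_compat_l; lra.
  - right. field. lra.
Qed.

(* The exponential factors cancel because [k * (2(k-1)S) + (1-k) * (2kS) = 0]. *)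
Lemma rpow_interpolation k x A B S D : 0 < k < 1 -> 0 <= x -> 0 < D ->
  exp (2 * (k - 1) * S) * D <= A -> exp (2 * k * S) * D <= B ->
  D * rpow x (2 * k) <= rpow (x ^ 2 * A) k * rpow B (1 - k).
Proof.
  intros Hk Hx HD HA HB.
  pose proof (exp_pos (2 * (k - 1) * S)). pose proof (exp_pos (2 * k * S)).
  assert (0 < exp (2 * (k - 1) * S) * D) by (apply Rmult_lt_0_compat; lra).
  assert (0 < exp (2 * k * S) * D) by (apply Rmult_lt_0_compat; lra).
  destruct (Req_EM_T x 0) as [E|NE].
  { rewrite E, rpow_0_l, Rmult_0_r. apply Rmult_le_pos; apply rpow_nonneg. }
  assert (0 < x ^ 2 * A) by (apply Rmult_lt_0_compat; [apply pow_lt|]; lra).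
  rewrite !rpow_Rpower by lra.
  rewrite <- Rpower_mult_distr by (try apply pow_lt; lra).
  replace (x ^ 2) with (Rpower x (INR 2)) by (apply Rpower_pow; lra).
  rewrite Rpower_mult. replace (INR 2 * k) with (2 * k) by (simpl; ring).
  assert (KA : Rpower (exp (2 * (k - 1) * S) * D) k <= Rpower A k) by (apply Rle_Rpower_l; lra).
  assert (KB : Rpower (exp (2 * k * S) * D) (1 - k) <= Rpower B (1 - k)) by (apply Rle_Rpower_l; lra).
  assert (KD : Rpower (exp (2 * (k - 1) * S) * D) k * Rpower (exp (2 * k * S) * D) (1 - k) = D).
  { unfold Rpower. rewrite <- exp_plus, !ln_mult, !ln_exp by lra.
    replace (k * (2 * (k - 1) * S + ln D) + (1 - k) * (2 * k * S + ln D)) with (ln D) by ring.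
    apply exp_ln. lra. }
  assert (0 < Rpower x (2 * k)) by (unfold Rpower; apply exp_pos).
  assert (0 < Rpower (exp (2 * (k - 1) * S) * D) k) by (unfold Rpower; apply exp_pos).
  assert (0 < Rpower (exp (2 * k * S) * D) (1 - k)) by (unfold Rpower; apply exp_pos).
  assert (D <= Rpower A k * Rpower B (1 - k)) by (rewrite <- KD; apply Rmult_le_compat; lra).
  nra.
Qed.
Definition rpoly (a : nat -> R) (L : nat) (s : R) : R := sum_f_R0 (fun j => a j * s ^ j) L.

Lemma rpoly_S a L s : rpoly a (S L) s = rpoly a L s + a (S L) * s ^ S L.
Proof. apply tech5. Qed.

Lemma rpoly_at0 a L : rpoly a L 0 = a 0%nat.
Proof. induction L as [|L IH]; [unfold rpoly; simpl; ring|]. rewrite rpoly_S, IH. simpl. ring. Qed.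

Lemma rpoly_at1 a L : rpoly a L 1 = sum_f_R0 a L.
Proof. apply sum_eq. intros. rewrite pow1. ring. Qed.

Lemma rpoly_lincomb a b c d L s :
  rpoly (fun j => c * a j + d * b j) L s = c * rpoly a L s + d * rpoly b L s.
Proof. induction L as [|L IH]; [unfold rpoly; simpl; ring|]. rewrite !rpoly_S, IH. ring. Qed.

Lemma rpoly_derive a L s :
  is_derive (rpoly a (S L)) s (rpoly (fun j => INR (S j) * a (S j)) L s).
Proof. apply is_derive_Reals. exact (derivable_pt_lim_finite_sum a s (S L)). Qed.

Lemma Cmod_pair_sum (f g : nat -> R) n :
  Cmod (sum_f_R0 f n, sum_f_R0 g n) <= sum_f_R0 (fun j => Cmod (f j, g j)) n.
Proof.
  induction n as [|n IH]; simpl; [lra|].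
  change (sum_f_R0 f n + f (S n), sum_f_R0 g n + g (S n))
    with ((sum_f_R0 f n, sum_f_R0 g n) + (f (S n), g (S n)))%C.
  eapply Rle_trans; [apply Cmod_triangle|lra].
Qed.

Lemma fold_Rplus_seq (f : nat -> R) a n :
  fold_right Rplus 0 (map f (seq a (S n))) = sum_f_R0 (fun i => f (a + i)%nat) n.
Proof.
  revert a. induction n as [|n IH]; intros a.
  - simpl. rewrite Nat.add_0_r. ring.
  - change (fold_right Rplus 0 (map f (seq a (S (S n)))))
      with (f a + fold_right Rplus 0 (map f (seq (S a) (S n)))).
    rewrite IH, (decomp_sum (fun i => f (a + i)%nat) (S n)) by lia.
    rewrite Nat.add_0_r. f_equal. apply sum_eq. intros i _. f_equal. lia.
Qed.

Lemma Re_fold_Cplus (l : list C) : Re (fold_right Cplus 0%C l) = fold_right Rplus 0 (map Re l).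
Proof. induction l as [|c l IH]; simpl; [reflexivity|]. rewrite <- IH. reflexivity. Qed.

Lemma Im_fold_Cplus (l : list C) : Im (fold_right Cplus 0%C l) = fold_right Rplus 0 (map Im l).
Proof. induction l as [|c l IH]; simpl; [reflexivity|]. rewrite <- IH. reflexivity. Qed.

Lemma Cmod_scal_R (c : C) t : Cmod (Re c * t, Im c * t) = Cmod c * Rabs t.
Proof.
  replace (Re c * t, Im c * t) with (c * RtoC t)%C
    by (destruct c; apply injective_projections; cbv [Cmult RtoC Re Im fst snd]; ring).
  rewrite Cmod_mult, Cmod_R. reflexivity.
Qed.

Lemma Rabs_Re_conj_mul3 (a b c : C) : Rabs (Re (Cconj a * b * c)) <= Cmod a * Cmod b * Cmod c.
Proof. rewrite <- Cmod_conj with (c := a), <- !Cmod_mult. apply re_le_Cmod. Qed.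

Lemma pow_le_1 x n : 0 <= x <= 1 -> x ^ n <= 1.
Proof. intros Hx. rewrite <- (pow1 n). apply pow_incr. exact Hx. Qed.

Section TruncatedExponential.
Variable z : C.

Definition ecoef (j : nat) : C := (z ^ j / RtoC (INR (fact j)))%C.

Lemma ecoef_S j : (RtoC (INR (S j)) * ecoef (S j) = z * ecoef j)%C.
Proof.
  unfold ecoef. rewrite fact_simpl, mult_INR, RtoC_mult. simpl Cpow. field.
  split; intros E; apply RtoC_inj in E; revert E;
    solve [apply INR_fact_neq_0 | apply not_0_INR; lia].
Qed.

Lemma Cmod_ecoef j : Cmod (ecoef j) = Cmod z ^ j / INR (fact j).
Proof.
  unfold ecoef. rewrite Cmod_div, Cmod_pow, Cmod_R, Rabs_pos_eq; [reflexivity|apply pos_INR|].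
  intros E. apply RtoC_inj in E. revert E. apply INR_fact_neq_0.
Qed.

Lemma Re_ecoef_S j : INR (S j) * Re (ecoef (S j)) = Re z * Re (ecoef j) - Im z * Im (ecoef j).
Proof.
  generalize (ecoef_S j). generalize (ecoef (S j)) (ecoef j) (INR (S j)).
  intros [a b] [c d] n E. apply (f_equal Re) in E. destruct z as [x y].
  cbv [Cmult RtoC Re Im fst snd] in *. lra.
Qed.

Lemma Im_ecoef_S j : INR (S j) * Im (ecoef (S j)) = Re z * Im (ecoef j) + Im z * Re (ecoef j).
Proof.
  generalize (ecoef_S j). generalize (ecoef (S j)) (ecoef j) (INR (S j)).
  intros [a b] [c d] n E. apply (f_equal Im) in E. destruct z as [x y].
  cbv [Cmult RtoC Re Im fst snd] in *. lra.
Qed.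

(* Real and imaginary parts of [E_L(s z)]. *)
Let G := rpoly (fun j => Re (ecoef j)).
Let H := rpoly (fun j => Im (ecoef j)).

Lemma G_derive L s : is_derive (G (S L)) s (Re z * G L s - Im z * H L s).
Proof.
  assert (E : rpoly (fun j => INR (S j) * Re (ecoef (S j))) L s
              = rpoly (fun j => Re z * Re (ecoef j) + - Im z * Im (ecoef j)) L s).
  { unfold rpoly. apply sum_eq. intros j _. rewrite Re_ecoef_S. ring. }
  rewrite rpoly_lincomb in E.
  replace (Re z * G L s - Im z * H L s) with (rpoly (fun j => INR (S j) * Re (ecoef (S j))) L s)
    by (rewrite E; unfold G, H; ring).
  apply rpoly_derive.
Qed.

Lemma H_derive L s : is_derive (H (S L)) s (Re z * H L s + Im z * G L s).
Proof.
  assert (E : rpoly (fun j => INR (S j) * Im (ecoef (S j))) L s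
              = rpoly (fun j => Re z * Im (ecoef j) + Im z * Re (ecoef j)) L s).
  { unfold rpoly. apply sum_eq. intros j _. rewrite Im_ecoef_S. ring. }
  rewrite rpoly_lincomb in E.
  replace (Re z * H L s + Im z * G L s) with (rpoly (fun j => INR (S j) * Im (ecoef (S j))) L s)
    by (rewrite E; unfold G, H; ring).
  apply rpoly_derive.
Qed.

Let Phi L s := (G L s ^ 2 + H L s ^ 2) * exp (-2 * Re z * s).
Let dPhi L s :=
  -2 * exp (-2 * Re z * s) * Re (Cconj (G (S L) s, H (S L) s) * z * (ecoef (S L) * RtoC (s ^ S L))).

(* Since [d/ds E_{L+1}(sz) = z E_L(sz)], only the top term [z^{L+1} s^{L+1}/(L+1)!] of
   [E_{L+1}(sz)] survives in the derivative of [|E_{L+1}(sz)|^2 e^{-2 Re(z) s}]. *)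
Lemma Phi_derive L s : is_derive (Phi (S L)) s (dPhi L s).
Proof.
  assert (Dexp : is_derive (fun s => exp (-2 * Re z * s)) s (-2 * Re z * exp (-2 * Re z * s)))
    by (auto_derive; [exact I|ring]).
  assert (D : is_derive (Phi (S L)) s
     ((INR 2 * (Re z * G L s - Im z * H L s) * G (S L) s ^ 1
       + INR 2 * (Re z * H L s + Im z * G L s) * H (S L) s ^ 1) * exp (-2 * Re z * s)
      + (G (S L) s ^ 2 + H (S L) s ^ 2) * (-2 * Re z * exp (-2 * Re z * s)))).
  { apply (is_derive_mult (fun s => G (S L) s ^ 2 + H (S L) s ^ 2)
                          (fun s => exp (-2 * Re z * s))); [|exact Dexp|intros; apply Rmult_comm].
    apply (is_derive_plus (fun s => G (S L) s ^ 2) (fun s => H (S L) s ^ 2));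
      apply is_derive_pow; [apply G_derive|apply H_derive]. }
  match type of D with is_derive _ _ ?v => replace (dPhi L s) with v; [exact D|] end.
  unfold dPhi, G, H. rewrite !rpoly_S.
  generalize (ecoef (S L)) (s ^ S L) (rpoly (fun j => Re (ecoef j)) L s)
             (rpoly (fun j => Im (ecoef j)) L s) (exp (-2 * Re z * s)).
  intros [a b] t g h e. destruct z as [x y].
  cbv [Cconj Cmult RtoC Re Im fst snd INR]. ring.
Qed.

Lemma Phi_at0 L : Phi L 0 = 1.
Proof.
  unfold Phi, G, H. rewrite !rpoly_at0, Rmult_0_r, exp_0. unfold ecoef. simpl.
  unfold Cdiv, Cinv, Cmult. simpl. field.
Qed.

Lemma Cmod_GH_le L s : 0 <= s <= 1 -> Cmod (G L s, H L s) <= exp (Cmod z).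
Proof.
  intros Hs. eapply Rle_trans; [apply Cmod_pair_sum|].
  eapply Rle_trans; [|apply exp_ge_taylor, Cmod_ge_0].
  apply sum_Rle. intros j _. rewrite Cmod_scal_R, <- Cmod_ecoef.
  pose proof (Cmod_ge_0 (ecoef j)).
  assert (Rabs (s ^ j) <= 1)
    by (rewrite <- RPow_abs, Rabs_pos_eq by lra; apply pow_le_1; lra).
  nra.
Qed.

Lemma dPhi_abs_le L s : 0 <= s <= 1 ->
  Rabs (dPhi L s) <= 2 * Cmod z * exp (3 * Cmod z) * (Cmod z ^ S L / INR (fact (S L))).
Proof.
  intros Hs. set (r := Cmod z). set (rho := r ^ S L / INR (fact (S L))).
  assert (Hr : 0 <= r) by apply Cmod_ge_0.
  assert (Hexp : exp (-2 * Re z * s) <= exp (2 * r)).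
  { pose proof (re_le_Cmod z) as Hre. fold r in Hre. apply Rabs_le_between in Hre.
    assert (Hle : -2 * Re z * s <= 2 * r) by nra.
    destruct (Rle_lt_or_eq_dec _ _ Hle) as [Hlt| ->]; [left; apply exp_increasing, Hlt|lra]. }
  assert (Htop : Cmod (ecoef (S L) * RtoC (s ^ S L)) <= rho).
  { rewrite Cmod_mult, Cmod_R, Cmod_ecoef. fold r rho.
    assert (Rabs (s ^ S L) <= 1)
      by (rewrite <- RPow_abs, Rabs_pos_eq by lra; apply pow_le_1; lra).
    assert (0 <= rho)
      by (apply Rmult_le_pos; [apply pow_le, Hr|left; apply Rinv_0_lt_compat, INR_fact_lt_0]).
    pose proof (Rabs_pos (s ^ S L)). nra. }
  pose proof (Cmod_GH_le (S L) s Hs) as HGH. fold r in HGH.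
  pose proof (Rabs_Re_conj_mul3 (G (S L) s, H (S L) s) z (ecoef (S L) * RtoC (s ^ S L))) as HK.
  fold r in HK.
  pose proof (Cmod_ge_0 (G (S L) s, H (S L) s)). pose proof (Cmod_ge_0 (ecoef (S L) * RtoC (s ^ S L))).
  assert (Habs2 : Rabs (-2) = 2) by (rewrite Rabs_left; lra).
  unfold dPhi. rewrite !Rabs_mult, Habs2, (Rabs_pos_eq (exp _)) by (left; apply exp_pos).
  replace (3 * r) with (2 * r + r) by ring. rewrite exp_plus.
  pose proof (exp_pos (-2 * Re z * s)).
  assert (Rabs (Re (Cconj (G (S L) s, H (S L) s) * z * (ecoef (S L) * RtoC (s ^ S L))))
          <= exp r * r * rho).
  { eapply Rle_trans; [exact HK|]. apply Rmult_le_compat; nra. }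
  pose proof (Rabs_pos (Re (Cconj (G (S L) s, H (S L) s) * z * (ecoef (S L) * RtoC (s ^ S L))))).
  nra.
Qed.

Lemma Phi_at1_lower L :
  1 - 2 * Cmod z * exp (3 * Cmod z) * (Cmod z ^ S L / INR (fact (S L))) <= Phi (S L) 1.
Proof.
  destruct (MVT_gen (Phi (S L)) 0 1 (dPhi L)) as [c [Hc E]].
  - intros s _. apply Phi_derive.
  - intros s _. apply continuity_pt_filterlim, (ex_derive_continuous (V := R_NormedModule)).
    eexists. apply Phi_derive.
  - rewrite Rmin_left, Rmax_right in Hc by lra.
    rewrite Phi_at0, Rminus_0_r, Rmult_1_r in E.
    pose proof (dPhi_abs_le L c Hc) as B. apply Rabs_le_between in B. lra.
Qed.

Lemma Cmod_Etrunc_sq L : Cmod (Etrunc L z) ^ 2 = (G L 1 ^ 2 + H L 1 ^ 2).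
Proof.
  rewrite Cmod2_alt. unfold Etrunc.
  rewrite Re_fold_Cplus, Im_fold_Cplus, !map_map, !fold_Rplus_seq.
  unfold G, H. rewrite !rpoly_at1. reflexivity.
Qed.

End TruncatedExponential.

Lemma pow_div_fact_le_exp r n : 0 <= r -> r ^ n / INR (fact n) <= exp r.
Proof.
  intros Hr. eapply Rle_trans; [|apply (exp_ge_taylor r n Hr)].
  assert (Hpos : forall k, 0 <= r ^ k / INR (fact k))
    by (intros k; apply Rmult_le_pos; [apply pow_le, Hr|left; apply Rinv_0_lt_compat, INR_fact_lt_0]).
  destruct n as [|n]; simpl; [lra|].
  pose proof (cond_pos_sum _ n Hpos). lra.
Qed.

Lemma INR_le_pow2 n : INR n <= 2 ^ n.
Proof.
  induction n as [|n IH]; [simpl; lra|].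
  rewrite S_INR. simpl. pose proof (pow_R1_Rle 2 n ltac:(lra)). lra.
Qed.

(* With [r <= L/64]: [r^L/L! <= (L/64)^L/L! <= e^L/64^L] and [e^{3r} <= e^L], while [e^2/64 <= 1/4]. *)
Lemma truncation_error_le r L : 0 <= r -> 64 * r <= INR L ->
  2 * r * exp (3 * r) * (r ^ L / INR (fact L)) <= (1/2) ^ L.
Proof.
  intros Hr HL.
  assert (Hfact : 0 < / INR (fact L)) by (apply Rinv_0_lt_compat, INR_fact_lt_0).
  assert (Hterm : r ^ L / INR (fact L) <= exp (INR L) * (/ 64) ^ L).
  { apply Rle_trans with ((INR L / 64) ^ L / INR (fact L)).
    - apply Rmult_le_compat_r; [lra|]. apply pow_incr. lra.
    - unfold Rdiv. rewrite Rpow_mult_distr, Rmult_comm, <- Rmult_assoc.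
      apply Rmult_le_compat_r; [apply pow_le; lra|].
      rewrite Rmult_comm. apply pow_div_fact_le_exp, pos_INR. }
  assert (Hexp : exp (3 * r) <= exp (INR L)).
  { destruct (Rle_lt_or_eq_dec (3 * r) (INR L) ltac:(lra)) as [Hlt| ->];
      [left; apply exp_increasing, Hlt|lra]. }
  assert (0 <= r ^ L / INR (fact L)) by (apply Rmult_le_pos; [apply pow_le|]; lra).
  pose proof (exp_pos (3 * r)).
  apply Rle_trans with (INR L / 32 * exp (INR L) * (exp (INR L) * (/ 64) ^ L)).
  { apply Rmult_le_compat; try lra; [apply Rmult_le_pos; lra|]. apply Rmult_le_compat; lra. }
  assert (HeL : exp (INR L) = exp 1 ^ L).
  { clear. induction L as [|L IH]; [apply exp_0|]. rewrite S_INR, exp_plus, IH. simpl. ring. }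
  rewrite HeL.
  replace (INR L / 32 * exp 1 ^ L * (exp 1 ^ L * (/ 64) ^ L))
    with (INR L / 32 * (exp 1 * exp 1 * / 64) ^ L) by (rewrite !Rpow_mult_distr; field).
  pose proof exp_le_3. pose proof (exp_pos 1).
  assert (Hq : (exp 1 * exp 1 * / 64) ^ L <= (1/2) ^ L * (1/2) ^ L).
  { rewrite <- Rpow_mult_distr. apply pow_incr. split; [apply Rmult_le_pos; [nra|lra]|nra]. }
  assert (HL2 : INR L * (1/2) ^ L <= 1).
  { apply Rle_trans with (2 ^ L * (1/2) ^ L).
    - apply Rmult_le_compat_r; [apply pow_le; lra|apply INR_le_pow2].
    - rewrite <- Rpow_mult_distr. replace (2 * (1/2)) with 1 by field. rewrite pow1. lra. }
  assert (0 < (1/2) ^ L) by (apply pow_lt; lra).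
  pose proof (pos_INR L).
  assert (INR L / 32 * (exp 1 * exp 1 * / 64) ^ L <= INR L / 32 * ((1/2) ^ L * (1/2) ^ L))
    by (apply Rmult_le_compat_l; lra).
  nra.
Qed.

Lemma Etrunc_lower_bound (z : C) (L : nat) : (1 <= L)%nat -> 64 * Cmod z <= INR L ->
  exp (2 * Re z) * (1 - (1/2) ^ L) <= Cmod (Etrunc L z) ^ 2.
Proof.
  intros HL Hz. destruct L as [|L]; [lia|].
  pose proof (Phi_at1_lower z L) as P. cbv beta in P.
  rewrite <- Cmod_Etrunc_sq, Rmult_1_r in P.
  pose proof (truncation_error_le (Cmod z) (S L) (Cmod_ge_0 z) Hz) as T.
  assert (E : exp (-2 * Re z) * exp (2 * Re z) = 1)
    by (rewrite <- exp_plus; replace (-2 * Re z + 2 * Re z) with 0 by ring; apply exp_0).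
  pose proof (exp_pos (2 * Re z)).
  set (c2 := Cmod (Etrunc (S L) z) ^ 2) in *.
  replace c2 with (c2 * exp (-2 * Re z) * exp (2 * Re z)) by (rewrite Rmult_assoc, E; ring).
  rewrite (Rmult_comm (exp (2 * Re z))). apply Rmult_le_compat_r; lra.
Qed.

Lemma Rceil_bounds y : y <= IZR (Rceil y) < y + 1.
Proof.
  unfold Rceil. destruct (archimed (- y)) as [H1 H2].
  rewrite opp_IZR, minus_IZR. simpl. lra.
Qed.

Lemma natceil_ge y : 0 <= y -> y <= INR (natceil y).
Proof.
  intros Hy. pose proof (Rceil_bounds y). unfold natceil.
  assert (0 <= Rceil y)%Z by (apply le_IZR; lra).
  rewrite INR_IZR_INZ, Z2Nat.id by assumption. lra.
Qed.

Lemma natceil_lt y : 0 <= y -> INR (natceil y) < y + 1.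
Proof.
  intros Hy. pose proof (Rceil_bounds y). unfold natceil.
  assert (0 <= Rceil y)%Z by (apply le_IZR; lra).
  rewrite INR_IZR_INZ, Z2Nat.id by assumption. lra.
Qed.

Lemma ln_lt_self t : 0 < t -> ln t < t.
Proof.
  intros Ht. pose proof (exp_ineq1_le t). rewrite <- (ln_exp t) at 2.
  apply ln_increasing; lra.
Qed.

(* [2N ln x = 4N ln (sqrt x) < 4N sqrt x <= x - 2 sqrt x] once [sqrt x >= 4N + 2]. *)
Lemma two_N_ln_le (N : nat) x : INR (4 * N + 2) ^ 2 <= x -> 2 * INR N * ln x + 2 <= x.
Proof.
  intros Hx. rewrite plus_INR, mult_INR in Hx. simpl in Hx. pose proof (pos_INR N).
  set (t := sqrt x). assert (Ht : t * t = x) by (apply sqrt_sqrt; nra).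
  assert (4 * INR N + 2 <= t).
  { apply Rsqr_incr_0_var; unfold Rsqr; [rewrite Ht; nra|apply sqrt_pos]. }
  rewrite <- Ht, ln_mult by lra. pose proof (ln_lt_self t ltac:(lra)). nra.
Qed.

Definition ell_step (N n : nat) : nat := (2 * natceil (INR N * ln (INR n)))%nat.

Lemma ell_S N q j : (1 <= j)%nat -> ell N q (S j) = ell_step N (ell N q j).
Proof. intros Hj. destruct j as [|j]; [lia|reflexivity]. Qed.

Lemma ell_step_lt_ln N n : (1 <= n)%nat -> INR (ell_step N n) < 2 * INR N * ln (INR n) + 2.
Proof.
  intros Hn. unfold ell_step. rewrite mult_INR.
  assert (0 <= INR N * ln (INR n)).
  { apply Rmult_le_pos; [apply pos_INR|]. rewrite <- ln_1.
    apply ln_le; [lra|apply (le_INR 1); exact Hn]. }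
  pose proof (natceil_lt _ H). simpl (INR 2). lra.
Qed.

Section ThresholdSequence.
Variables (N X : nat).
Hypothesis HX : INR (4 * N + 2) ^ 2 <= INR X.

Lemma ell_step_decr n : (X < n)%nat -> (ell_step N n < n)%nat.
Proof.
  intros Hn. apply INR_lt.
  assert (INR X <= INR n) by (apply le_INR; lia).
  pose proof (ell_step_lt_ln N n ltac:(lia)). pose proof (two_N_ln_le N (INR n) ltac:(lra)).
  lra.
Qed.

Lemma ell_step_below n : (n <= X)%nat -> (ell_step N n <= X)%nat.
Proof.
  intros Hn. destruct n as [|n].
  - assert (ln0 : ln 0 = 0)
      by (unfold ln; destruct (Rlt_dec 0 0); [exfalso; lra|reflexivity]).
    unfold ell_step. simpl INR. rewrite ln0, Rmult_0_r.
    unfold natceil, Rceil. replace (up (-0)) with 1%Z; [simpl; lia|].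
    apply tech_up; simpl; lra.
  - apply INR_le, Rlt_le.
    assert (H1 : 1 <= INR (S n)) by (apply (le_INR 1); lia).
    assert (INR (S n) <= INR X) by (apply le_INR; lia).
    pose proof (ln_le (INR (S n)) (INR X) ltac:(lra) ltac:(assumption)). pose proof (pos_INR N).
    pose proof (ell_step_lt_ln N (S n) ltac:(lia)). pose proof (two_N_ln_le N (INR X) HX).
    nra.
Qed.

End ThresholdSequence.

Lemma exists_last_index (P : nat -> Prop) (Pdec : forall j, {P j} + {~ P j}) n : P 1%nat ->
  exists R, (1 <= R)%nat /\ P R /\ forall j, (1 <= j <= n)%nat -> P j -> (j <= R)%nat.
Proof.
  intros H1. induction n as [|n [R [HR1 [HR HRmax]]]].
  - exists 1%nat. repeat split; [lia|exact H1|]. intros j Hj. lia.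
  - destruct (Pdec (S n)) as [HP|HP].
    + exists (S n). repeat split; [lia|exact HP|]. intros j Hj _. lia.
    + exists R. repeat split; [exact HR1|exact HR|]. intros j Hj Pj.
      destruct (Nat.eq_dec j (S n)) as [->|Hne]; [contradiction|]. apply HRmax; [lia|exact Pj].
Qed.

Section DescentAboveThreshold.
Variables (g : nat -> nat) (X : nat) (e : nat -> nat).
Hypothesis g_decr : forall n, (X < n)%nat -> (g n < n)%nat.
Hypothesis g_below : forall n, (n <= X)%nat -> (g n <= X)%nat.
Hypothesis e_S : forall j, (1 <= j)%nat -> e (S j) = g (e j).

Lemma above_threshold_pred j : (1 <= j)%nat -> (X < e (S j))%nat -> (X < e j)%nat.
Proof.
  intros Hj H. rewrite e_S in H by exact Hj.
  destruct (le_lt_dec (e j) X) as [Hle|Hlt]; [pose proof (g_below _ Hle); lia|exact Hlt].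
Qed.

Lemma above_threshold_gap d j : (1 <= j)%nat -> (X < e (j + d))%nat -> (e (j + d) + d <= e j)%nat.
Proof.
  intros Hj. induction d as [|d IH]; intros H; [rewrite !Nat.add_0_r; lia|].
  replace (j + S d)%nat with (S (j + d)) in * by lia.
  pose proof (above_threshold_pred (j + d) ltac:(lia) H) as Hd.
  specialize (IH Hd). rewrite e_S in * by lia. pose proof (g_decr _ Hd). lia.
Qed.

Lemma last_above_threshold : (X < e 1)%nat ->
  exists R, (1 <= R)%nat /\ (X < e R)%nat /\
            forall j, (1 <= j)%nat -> (X < e j)%nat -> (j <= R)%nat.
Proof.
  intros H1.
  destruct (exists_last_index (fun j => (X < e j)%nat) (fun j => lt_dec X (e j)) (e 1%nat) H1)
    as [R [HR1 [HR HRmax]]].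
  exists R. repeat split; [exact HR1|exact HR|]. intros j Hj Hx. apply HRmax; [|exact Hx].
  pose proof (above_threshold_gap (j - 1) 1 (le_n 1)). replace (1 + (j - 1))%nat with j in * by lia.
  specialize (H Hx). lia.
Qed.

End DescentAboveThreshold.

Lemma ell_1_gt N q X : (1 <= N)%nat -> exp (exp (INR X)) < INR q -> (X < ell N q 1)%nat.
Proof.
  intros HN Hq. change (ell N q 1) with (2 * natceil (INR N * ln (ln (INR q))))%nat.
  assert (exp (INR X) < ln (INR q)).
  { rewrite <- (ln_exp (exp (INR X))). apply ln_increasing; [apply exp_pos|exact Hq]. }
  assert (INR X < ln (ln (INR q))).
  { rewrite <- (ln_exp (INR X)). apply ln_increasing; [apply exp_pos|assumption]. }
  assert (1 <= INR N) by (apply (le_INR 1); exact HN).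
  pose proof (pos_INR X).
  assert (ln (ln (INR q)) <= INR N * ln (ln (INR q))) by nra.
  pose proof (natceil_ge (INR N * ln (ln (INR q))) ltac:(lra)).
  apply INR_lt. rewrite mult_INR. simpl (INR 2). lra.
Qed.

Section LengthsAboveThreshold.
Variables (N M q : nat).
Hypothesis HX : INR (4 * N + 2) ^ 2 <= INR (10 ^ M).
Hypothesis H1 : (10 ^ M < ell N q 1)%nat.

Lemma Rmax_idx_spec : (1 <= Rmax_idx N M q)%nat /\ (ell N q (Rmax_idx N M q) > 10 ^ M)%nat /\
  forall j, (1 <= j)%nat -> (ell N q j > 10 ^ M)%nat -> (j <= Rmax_idx N M q)%nat.
Proof.
  unfold Rmax_idx. apply epsilon_spec.
  apply (last_above_threshold (ell_step N) (10 ^ M) (ell N q));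
    [apply ell_step_decr, HX|apply ell_step_below, HX| |exact H1].
  apply ell_S.
Qed.

Lemma ell_ge_on_range i : (1 <= i <= Rmax_idx N M q)%nat ->
  (Rmax_idx N M q - i + 2 <= ell N q i)%nat.
Proof.
  intros Hi. destruct Rmax_idx_spec as [_ [HR _]].
  pose proof (above_threshold_gap (ell_step N) (10 ^ M) (ell N q)
    (ell_step_decr N (10 ^ M) HX) (ell_step_below N (10 ^ M) HX)
    (ell_S N q)
    (Rmax_idx N M q - i) i ltac:(lia)) as Hgap.
  replace (i + (Rmax_idx N M q - i))%nat with (Rmax_idx N M q) in Hgap by lia.
  pose proof (Nat.pow_nonzero 10 M ltac:(lia)). specialize (Hgap HR). lia.
Qed.

End LengthsAboveThreshold.

Lemma pow_le_antimono x m n : 0 <= x <= 1 -> (m <= n)%nat -> x ^ n <= x ^ m.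
Proof.
  intros Hx Hmn. replace n with (m + (n - m))%nat by lia. rewrite pow_add.
  pose proof (pow_le x m (proj1 Hx)). pose proof (pow_le_1 x (n - m) Hx).
  pose proof (pow_le x (n - m) (proj1 Hx)). nra.
Qed.

(* Invariant [1/2 + 2^{-(v+1)}]: the new factor is [>= 1 - p/2] with [p = 2^{-(v+1)} <= 1/2],
   and [(1 - p/2)(1/2 + p) >= 1/2 + p/2]. *)
Lemma lprod_one_sub_half_pow_ge (l : nat -> nat) v a :
  (forall i, (a <= i < a + v)%nat -> (a + v - i + 1 <= l i)%nat) ->
  1/2 + (1/2) ^ (v + 1) <= lprod (seq a v) (fun i => 1 - (1/2) ^ (l i)).
Proof.
  revert a. induction v as [|v IH]; intros a Hl; [unfold lprod; simpl; lra|].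
  change (lprod (seq a (S v)) (fun i => 1 - (1/2) ^ l i))
    with ((1 - (1/2) ^ l a) * lprod (seq (S a) v) (fun i => 1 - (1/2) ^ l i)).
  pose proof (IH (S a) ltac:(intros i Hi; specialize (Hl i ltac:(lia)); lia)) as Hrest.
  assert (Hfirst : (1/2) ^ l a <= 1/2 * (1/2) ^ (v + 1)).
  { rewrite tech_pow_Rmult. apply pow_le_antimono; [lra|].
    specialize (Hl a ltac:(lia)). lia. }
  assert (Hp : (1/2) ^ (v + 1) <= 1/2).
  { rewrite Nat.add_1_r, <- tech_pow_Rmult. pose proof (pow_le_1 (1/2) v ltac:(lra)).
    pose proof (pow_le (1/2) v ltac:(lra)). lra. }
  pose proof (pow_le (1/2) (v + 1) ltac:(lra)). pose proof (pow_le (1/2) (l a) ltac:(lra)).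
  replace (S v + 1)%nat with (S (v + 1)) by lia. rewrite <- tech_pow_Rmult.
  set (p := (1/2) ^ (v + 1)) in *.
  assert ((1 - 1/2 * p) * (1/2 + p) <= (1 - (1/2) ^ l a) * lprod (seq (S a) v) (fun i => 1 - (1/2) ^ l i))
    by (apply Rmult_le_compat; lra).
  nra.
Qed.

Lemma first_index_or_last (P : nat -> Prop) (Pdec : forall j, {P j} + {~ P j}) R :
  exists v, (v <= R)%nat /\ (forall i, (1 <= i <= v)%nat -> ~ P i) /\
            (v = R \/ ((v < R)%nat /\ P (S v))).
Proof.
  induction R as [|R [v [HvR [Hbefore Hlast]]]].
  - exists 0%nat. repeat split; [lia| |left; reflexivity]. intros i Hi. lia.
  - destruct Hlast as [-> | [HvR' HP]].
    + destruct (Pdec (S R)) as [HP|HP].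
      * exists R. repeat split; [lia|exact Hbefore|right; split; [lia|exact HP]].
      * exists (S R). repeat split; [lia| |left; reflexivity].
        intros i Hi. destruct (Nat.eq_dec i (S R)) as [->|Hne]; [exact HP|apply Hbefore; lia].
    + exists v. repeat split; [lia|exact Hbefore|right; split; [lia|exact HP]].
Qed.

Lemma mollsum_nonneg lf N M q t chi alpha k : 0 <= mollsum lf N M q t chi alpha k.
Proof.
  apply lsum_nonneg. intros v _.
  apply Rmult_le_pos; [apply lprod_nonneg; intros; apply pow2_ge_0|apply pow2_ge_0].
Qed.

Lemma Cmod_Qj_ge_1 lf N M q t chi k v : k < 1 ->
  v = Rmax_idx N M q \/
  ((v < Rmax_idx N M q)%nat /\ (1 <= ell N q (S v))%nat /\
   INR (ell N q (S v)) <= 64 * Cmod (Pj lf N q (S v) t chi)) ->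
  1 <= Cmod (Qj lf N M q (S v) t chi k).
Proof.
  intros Hk [E|[Hv [Hl Hbig]]]; unfold Qj.
  - rewrite E, Nat.eqb_refl, Cmod_1. lra.
  - replace (Nat.eqb (S v) (S (Rmax_idx N M q))) with false by (symmetry; apply Nat.eqb_neq; lia).
    rewrite Cmod_pow. apply pow_R1_Rle.
    assert (0 < INR (ell N q (S v))) by (apply lt_0_INR; lia).
    assert (Hc : c_k k = 64) by (unfold c_k; rewrite Rmax_left by lra; ring).
    rewrite Cmod_div by (intros E; apply RtoC_inj in E; lra).
    rewrite Cmod_mult, !Cmod_R, Hc, !Rabs_pos_eq by lra.
    apply (Rmult_le_reg_r (INR (ell N q (S v)))); [lra|].
    unfold Rdiv. rewrite Rmult_assoc, Rinv_l by lra. lra.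
Qed.

Lemma mollsum_ge lf N M q t chi alpha k v :
  -1 <= alpha <= 1 -> (v <= Rmax_idx N M q)%nat ->
  (forall i, (1 <= i <= v)%nat ->
     (1 <= ell N q i)%nat /\ 64 * Cmod (Pj lf N q i t chi) < INR (ell N q i)) ->
  1 <= Cmod (Qj lf N M q (S v) t chi k) ->
  exp (2 * alpha * lsum (seq 1 v) (fun j => Re (Pj lf N q j t chi)))
    * lprod (seq 1 v) (fun i => 1 - (1/2) ^ ell N q i)
  <= mollsum lf N M q t chi alpha k.
Proof.
  intros Ha Hv Hsmall HQ.
  assert (HD : forall i, In i (seq 1 v) -> 0 <= 1 - (1/2) ^ ell N q i).
  { intros i Hi. apply in_seq in Hi.
    pose proof (pow_le_1 (1/2) (ell N q i) ltac:(lra)). lra. }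
  eapply Rle_trans;
    [|apply (lsum_ge_term _ (fun v => lprod (seq 1 v) (fun j => Cmod (Nj lf N q j t chi alpha) ^ 2)
                                     * Cmod (Qj lf N M q (S v) t chi k) ^ 2) v);
      [intros; apply Rmult_le_pos; [apply lprod_nonneg; intros; apply pow2_ge_0|apply pow2_ge_0]
      |apply in_seq; lia]].
  rewrite <- lsum_scal, <- (Rmult_1_r (exp _ * _)). apply Rmult_le_compat; [| |apply lprod_exp_lsum_le| ].
  - apply Rmult_le_pos; [left; apply exp_pos|apply lprod_nonneg, HD].
  - lra.
  - intros j Hj. apply in_seq in Hj. destruct (Hsmall j ltac:(lia)) as [Hl Hj'].
    replace (2 * alpha * Re (Pj lf N q j t chi)) with (2 * Re (RtoC alpha * Pj lf N q j t chi)%C)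
      by (simpl; ring).
    apply Etrunc_lower_bound; [exact Hl|].
    rewrite Cmod_mult, Cmod_R. pose proof (Cmod_ge_0 (Pj lf N q j t chi)).
    assert (Rabs alpha <= 1) by (apply Rabs_le; lra). pose proof (Rabs_pos alpha). nra.
  - exact HD.
  - nra.
Qed.

Lemma rpow_2k_le_mollsum lf N M q t chi k x : 0 < k < 1 -> 0 <= x ->
  INR (4 * N + 2) ^ 2 <= INR (10 ^ M) -> (10 ^ M < ell N q 1)%nat ->
  rpow x (2 * k) <=
  2 * (rpow (x ^ 2 * mollsum lf N M q t chi (k - 1) k) k * rpow (mollsum lf N M q t chi k k) (1 - k)).
Proof.
  intros Hk Hx HX H1.
  destruct (first_index_or_last (fun j => INR (ell N q j) <= 64 * Cmod (Pj lf N q j t chi))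
              (fun j => Rle_dec _ _) (Rmax_idx N M q)) as [v [HvR [Hbefore Hlast]]].
  pose proof (ell_ge_on_range N M q HX H1) as Hell.
  assert (Hsmall : forall i, (1 <= i <= v)%nat ->
            (1 <= ell N q i)%nat /\ 64 * Cmod (Pj lf N q i t chi) < INR (ell N q i)).
  { intros i Hi. split; [specialize (Hell i ltac:(lia)); lia|apply Rnot_le_lt, Hbefore, Hi]. }
  assert (HQ : 1 <= Cmod (Qj lf N M q (S v) t chi k)).
  { apply Cmod_Qj_ge_1; [lra|]. destruct Hlast as [E|[Hv HP]]; [left; exact E|right].
    repeat split; [exact Hv| |exact HP]. specialize (Hell (S v) ltac:(lia)). lia. }
  set (D := lprod (seq 1 v) (fun i => 1 - (1/2) ^ ell N q i)).
  assert (HD : 1/2 <= D).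
  { pose proof (pow_le (1/2) (v + 1) ltac:(lra)).
    eapply Rle_trans; [|apply lprod_one_sub_half_pow_ge]; [lra|].
    intros i Hi. specialize (Hell i ltac:(lia)). lia. }
  pose proof (rpow_interpolation k x _ _ (lsum (seq 1 v) (fun j => Re (Pj lf N q j t chi))) D
                Hk Hx ltac:(lra)
                (mollsum_ge lf N M q t chi (k - 1) k v ltac:(lra) HvR Hsmall HQ)
                (mollsum_ge lf N M q t chi k k v ltac:(lra) HvR Hsmall HQ)).
  pose proof (rpow_nonneg x (2 * k)). nra.
Qed.

Theorem lemma4p3 :
  forall (kappa : nat) (f : C -> C) (a : nat -> C),
  is_normalized_hecke_eigenform kappa f a ->
  forall k : R, 0 < k < 1 ->
  exists N0 : nat, forall N : nat, (N0 <= N)%nat ->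
  exists M0 : nat, forall M : nat, (M0 <= M)%nat ->
  exists Cst : R, 0 < Cst /\
  forall t : R,
  exists q0 : nat, forall q : nat, (q0 <= q)%nat -> Nat.modulo q 4 <> 2%nat ->
    let lf := lam kappa a in
    let L := fun chi => Lfun lf chi (RtoC (1/2) + RtoC t * Ci)%C in
    sum_prim q (fun chi => rpow (Cmod (L chi)) (2 * k))
    <= Cst *
       rpow (sum_prim q (fun chi => Cmod (L chi) ^ 2 * mollsum lf N M q t chi (k - 1) k)) k *
       rpow (sum_prim q (fun chi => mollsum lf N M q t chi k k)) (1 - k).
Proof.
  intros kappa f a _ k Hk. exists 1%nat. intros N HN.
  exists ((4 * N + 2) ^ 2)%nat. intros M HM. exists 2. split; [lra|]. intros t.
  assert (HX : INR (4 * N + 2) ^ 2 <= INR (10 ^ M)).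
  { rewrite <- pow_INR. apply le_INR. pose proof (Nat.pow_gt_lin_r 10 M ltac:(lia)). lia. }
  exists (S (natceil (exp (exp (INR (10 ^ M)))))). intros q Hq _ lf L.
  assert (H1 : (10 ^ M < ell N q 1)%nat).
  { apply ell_1_gt; [exact HN|]. apply le_INR in Hq. rewrite S_INR in Hq.
    pose proof (natceil_ge (exp (exp (INR (10 ^ M)))) ltac:(left; apply exp_pos)). lra. }
  unfold sum_prim. fold (lsum (prim_chars q) (fun chi => rpow (Cmod (L chi)) (2 * k))).
  eapply Rle_trans;
    [apply lsum_le; intros chi _; apply (rpow_2k_le_mollsum lf N M q t chi k (Cmod (L chi)));
       [exact Hk|apply Cmod_ge_0|exact HX|exact H1]|].
  rewrite lsum_scal, Rmult_assoc. apply Rmult_le_compat_l; [lra|].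
  apply lsum_holder; [exact Hk| |]; intros chi _; [apply Rmult_le_pos; [apply pow2_ge_0|]|];
    apply mollsum_nonneg.
Qed.
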